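(* Consider an agent-dependent SDP performance estimation problem for distributed optimization with $n\ge2$ agents in which all agents are equivalent, and let $(F,G)$ with $F=[f_1^T\dots f_n^T]$, $G=[G_{ij}]$ be any feasible solution. Define $f^A=\frac1n\sum_{i=1}^nf_i\in\mathbb{R}^q$, $G^A=\frac1n\sum_{i=1}^nG_{ii}\in\mathbb{R}^{p\times p}$, $G^C=\frac{1}{n(n-1)}\sum_{i=1}^n\sum_{j\ne i}G_{ij}\in\mathbb{R}^{p\times p}$, and let $F^s=[(f^A)^T\dots(f^A)^T]$ and $G^s\in\mathbb{R}^{np\times np}$ be the block matrix with all diagonal blocks equal to $G^A$ and all off-diagonal blocks equal to $G^C$. Then $(F^s,G^s)$ is feasible for the PEP and has the same objective value as $(F,G)$.
   Context: In the agent-dependent SDP PEP, each agent $i$ holds $p$ vector variables (iterates, consensus outputs, gradients, copies of common points such as $x^*$), gathered as columns of $P_i\in\mathbb{R}^{d\times p}$ in the same order for all agents, and $q$ function values in $f_i\in\mathbb{R}^q$; the variables are $F=[f_1^T\dots f_n^T]$ and $G=P^TP\succeq0$, $P=[P_1\dots P_n]$, $G_{ij}=P_i^TP_j$. The objective (performance criterion) and all constraints (algorithm, function-class interpolation, initial conditions, optimality condition $\frac1n\sum_i\nabla f_i(x^* )=0$, consensus constraints) are linear or linear-matrix-inequality constraints in $(F,G)$, plus $G\succeq0$. Agents $i,j$ are equivalent if for every feasible $(F,G)$, swapping the blocks of agents $i$ and $j$ in $F$ and in the block rows/columns of $G$ gives a feasible solution with the same objective value; ''all agents equivalent'' means every pair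 of agents is equivalent. *)

From HB Require Import structures.
From mathcomp Require Import all_boot all_order all_algebra all_fingroup.
Set Implicit Arguments. Unset Strict Implicit. Unset Printing Implicit Defensive.
Import Order.TTheory GRing.Theory Num.Theory.
Local Open Scope ring_scope.

Definition psd (R : realFieldType) (d : nat) (M : 'M[R]_d) : Prop :=
  M^T = M /\ forall x : 'cV[R]_d, 0 <= (x^T *m M *m x) 0 0.

(* Variables of the agent-dependent PEP:
   F : 'M_(n,q), row i is f_i^T  (so F = [f_1^T ... f_n^T] reshaped);
   G : 'I_n -> 'I_n -> 'M_p, G i j is the block G_ij = P_i^T P_j.
   The big matrix G = [G_ij] is PSD: block symmetric and nonnegative
   quadratic form on block vectors x = (x_1,...,x_n). *)
Definition block_psd (R : realFieldType) (n p : nat)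
  (G : 'I_n -> 'I_n -> 'M[R]_p) : Prop :=
  (forall i j, (G i j)^T = G j i) /\
  forall x : 'I_n -> 'cV[R]_p,
    0 <= \sum_i \sum_j ((x i)^T *m G i j *m x j) 0 0.

(* An abstract SDP PEP: an arbitrary family of linear matrix inequality
   constraints (affine in (F,G)); linear (in)equalities are 1x1 LMIs.
   The objective is an affine function of (F,G). *)
Record PEP (R : realFieldType) (n p q : nat) := {
  cI : Type;
  cdim : cI -> nat;
  cC : forall c, 'M[R]_(cdim c);
  cF : forall c, 'I_n -> 'I_q -> 'M[R]_(cdim c);
  cG : forall c, 'I_n -> 'I_n -> 'I_p -> 'I_p -> 'M[R]_(cdim c);
  o0 : R;
  oF : 'I_n -> 'I_q -> R;
  oG : 'I_n -> 'I_n -> 'I_p -> 'I_p -> R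
}.

Section PEPdefs.
Variables (R : realFieldType) (n p q : nat) (P : PEP R n p q).

Definition lmi_val (c : cI P) (F : 'M[R]_(n, q)) (G : 'I_n -> 'I_n -> 'M[R]_p)
  : 'M[R]_(cdim c) :=
  cC c + \sum_i \sum_k F i k *: cF c i k
       + \sum_i \sum_j \sum_k \sum_l G i j k l *: cG c i j k l.

Definition feasible (F : 'M[R]_(n, q)) (G : 'I_n -> 'I_n -> 'M[R]_p) : Prop :=
  block_psd G /\ forall c : cI P, psd (lmi_val c F G).

Definition objective (F : 'M[R]_(n, q)) (G : 'I_n -> 'I_n -> 'M[R]_p) : R :=
  o0 P + \sum_i \sum_k oF P i k * F i k
       + \sum_i \sum_j \sum_k \sum_l oG P i j k l * G i j k l.

Definition permF (s : 'S_n) (F : 'M[R]_(n, q)) : 'M[R]_(n, q) :=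
  \matrix_(i, k) F (s i) k.
Definition permG (s : 'S_n) (G : 'I_n -> 'I_n -> 'M[R]_p) :
  'I_n -> 'I_n -> 'M[R]_p := fun i j => G (s i) (s j).

Definition agents_equivalent (i j : 'I_n) : Prop :=
  forall F G, feasible F G ->
    feasible (permF (tperm i j) F) (permG (tperm i j) G) /\
    objective (permF (tperm i j) F) (permG (tperm i j) G) = objective F G.

Definition all_agents_equivalent : Prop :=
  forall i j : 'I_n, agents_equivalent i j.

End PEPdefs.

Section Sym.
Variables (R : realFieldType) (n p q : nat).

Definition fA (F : 'M[R]_(n, q)) : 'rV[R]_q := (n%:R)^-1 *: \sum_i row i F.
Definition GA (G : 'I_n -> 'I_n -> 'M[R]_p) : 'M[R]_p :=
  (n%:R)^-1 *: \sum_i G i i.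
Definition GC (G : 'I_n -> 'I_n -> 'M[R]_p) : 'M[R]_p :=
  ((n * (n - 1))%:R)^-1 *: \sum_i \sum_(j | j != i) G i j.

Definition Fsym (F : 'M[R]_(n, q)) : 'M[R]_(n, q) := \matrix_(i, k) fA F 0 k.
Definition Gsym (G : 'I_n -> 'I_n -> 'M[R]_p) : 'I_n -> 'I_n -> 'M[R]_p :=
  fun i j => if i == j then GA G else GC G.
End Sym.

From HB Require Import structures.
From mathcomp Require Import all_boot all_order all_algebra all_fingroup zify.
From Stdlib Require Import FunctionalExtensionality.
Set Implicit Arguments. Unset Strict Implicit. Unset Printing Implicit Defensive.
Import Order.TTheory GRing.Theory Num.Theory.
Local Open Scope ring_scope.

(* Agent equivalence is invariance under transpositions of agents, hence
   under every permutation of them.  The symmetrized solution (F^s, G^s) is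
   the uniform average of the n! permuted copies of (F, G): a permutation
   sends a given agent (resp. ordered pair of distinct agents) to every agent
   (resp. every such pair) equally often.  The feasible set is convex (the
   PSD cones are convex and the constraints are affine in (F, G)) and the
   objective is affine, so this average is feasible with the same objective. *)

Section Combination.
Variables (R : pzRingType) (V : lmodType R) (S : finType) (w : S -> R).

Lemma sum_comb_exchange (I : finType) (y : S -> I -> V) :
  \sum_i \sum_s w s *: y s i = \sum_s w s *: \sum_i y s i.
Proof. by rewrite exchange_big; apply: eq_bigr => s _; rewrite scaler_sumr. Qed.

Lemma scaler_comb (x : S -> R) (v : V) :
  (\sum_s w s * x s) *: v = \sum_s w s *: (x s *: v).
Proof. by rewrite scaler_suml; apply: eq_bigr => s _; rewrite scalerA. Qed.

Lemma comb_mxE (m d : nat) (M : S -> 'M[R]_(m, d)) i k :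
  (\sum_s w s *: M s) i k = \sum_s w s * M s i k.
Proof. by rewrite summxE; apply: eq_bigr => s _; rewrite mxE. Qed.

Variables (n p q : nat).

Definition affine_form (C : V) (A : 'I_n -> 'I_q -> V)
    (B : 'I_n -> 'I_n -> 'I_p -> 'I_p -> V)
    (F : 'M[R]_(n, q)) (G : 'I_n -> 'I_n -> 'M[R]_p) : V :=
  C + \sum_i \sum_k F i k *: A i k
    + \sum_i \sum_j \sum_k \sum_l G i j k l *: B i j k l.

Lemma affine_form_comb C A B (Fs : S -> 'M[R]_(n, q))
    (Gs : S -> 'I_n -> 'I_n -> 'M[R]_p) :
  \sum_s w s = 1 ->
  affine_form C A B (\sum_s w s *: Fs s) (fun i j => \sum_s w s *: Gs s i j)
  = \sum_s w s *: affine_form C A B (Fs s) (Gs s).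
Proof.
move=> w1; rewrite /affine_form.
under [RHS]eq_bigr do rewrite !scalerDr.
rewrite !big_split /= -scaler_suml w1 scale1r.
congr (_ + _ + _).
- under eq_bigr => i _ do under eq_bigr => k _ do
    rewrite comb_mxE scaler_comb.
  under eq_bigr => i _ do rewrite sum_comb_exchange.
  exact: sum_comb_exchange.
- under eq_bigr => i _ do under eq_bigr => j _ do under eq_bigr => k _ do
    under eq_bigr => l _ do rewrite comb_mxE scaler_comb.
  under eq_bigr => i _ do under eq_bigr => j _ do under eq_bigr => k _ do
    rewrite sum_comb_exchange.
  under eq_bigr => i _ do under eq_bigr => j _ do rewrite sum_comb_exchange.
  under eq_bigr => i _ do rewrite sum_comb_exchange.
  exact: sum_comb_exchange.
Qed.
End Combination.

Section ConicCombination.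
Variables (R : realFieldType) (S : finType) (w : S -> R).
Hypothesis w_ge0 : forall s, 0 <= w s.

Lemma quad_comb (d : nat) (M : S -> 'M[R]_d) (u : 'rV[R]_d) (v : 'cV[R]_d) :
  (u *m (\sum_s w s *: M s) *m v) 0 0 = \sum_s w s * (u *m M s *m v) 0 0.
Proof.
rewrite mulmx_sumr mulmx_suml summxE; apply: eq_bigr => s _.
by rewrite -scalemxAr -scalemxAl mxE.
Qed.

Lemma psd_conic (d : nat) (M : S -> 'M[R]_d) :
  (forall s, psd (M s)) -> psd (\sum_s w s *: M s).
Proof.
move=> M_psd; split.
  rewrite linear_sum; apply: eq_bigr => s _; rewrite linearZ /=.
  by case: (M_psd s) => ->.
move=> x; rewrite quad_comb; apply: sumr_ge0 => s _.
by apply: mulr_ge0 => //; case: (M_psd s) => _ ->.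
Qed.

Lemma block_psd_conic (n p : nat) (Gs : S -> 'I_n -> 'I_n -> 'M[R]_p) :
  (forall s, block_psd (Gs s)) ->
  block_psd (fun i j => \sum_s w s *: Gs s i j).
Proof.
move=> G_psd; split.
  move=> i j; rewrite linear_sum; apply: eq_bigr => s _; rewrite linearZ /=.
  by case: (G_psd s) => ->.
move=> x; under eq_bigr => i _ do under eq_bigr => j _ do rewrite quad_comb.
under eq_bigr => i _ do rewrite exchange_big.
rewrite exchange_big sumr_ge0 // => s _.
under eq_bigr do rewrite -mulr_sumr.
rewrite -mulr_sumr; apply: mulr_ge0 => //.
by case: (G_psd s) => _ ->.
Qed.
End ConicCombination.

Section PEPConvexity.
Variables (R : realFieldType) (n p q : nat) (P : PEP R n p q).

Lemma lmi_valE (c : cI P) F G :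
  lmi_val c F G = affine_form (cC c) (cF c) (cG c) F G.
Proof. by []. Qed.

Lemma objectiveE F G :
  objective P F G = affine_form (V := R^o) (o0 P) (oF P) (oG P) F G.
Proof.
rewrite /objective /affine_form; congr (_ + _ + _).
  by under eq_bigr do under eq_bigr do rewrite mulrC.
by under eq_bigr do under eq_bigr do under eq_bigr do under eq_bigr do
  rewrite mulrC.
Qed.

Variables (S : finType) (w : S -> R).
Variables (Fs : S -> 'M[R]_(n, q)) (Gs : S -> 'I_n -> 'I_n -> 'M[R]_p).
Hypothesis w_sum1 : \sum_s w s = 1.

Lemma objective_comb :
  objective P (\sum_s w s *: Fs s) (fun i j => \sum_s w s *: Gs s i j)
  = \sum_s w s * objective P (Fs s) (Gs s).
Proof.
rewrite objectiveE affine_form_comb //.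
by apply: eq_bigr => s _; rewrite objectiveE.
Qed.

Lemma feasible_comb :
  (forall s, 0 <= w s) -> (forall s, feasible P (Fs s) (Gs s)) ->
  feasible P (\sum_s w s *: Fs s) (fun i j => \sum_s w s *: Gs s i j).
Proof.
move=> w_ge0 feas; split.
  by apply: block_psd_conic => // s; case: (feas s).
move=> c; rewrite lmi_valE affine_form_comb //; apply: psd_conic => // s.
by case: (feas s) => _; apply.
Qed.
End PEPConvexity.

Section Symmetries.
Variables (R : realFieldType) (n p q : nat) (P : PEP R n p q).

Definition pep_symmetry (s : 'S_n) : Prop :=
  forall F G, feasible P F G ->
    feasible P (permF s F) (permG s G) /\
    objective P (permF s F) (permG s G) = objective P F G.

Lemma permF1 (F : 'M[R]_(n, q)) : permF 1 F = F.
Proof. by apply/matrixP => i k; rewrite mxE perm1. Qed.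

Lemma permG1 (G : 'I_n -> 'I_n -> 'M[R]_p) : permG 1 G = G.
Proof.
by rewrite /permG; do 2!apply: functional_extensionality => ?; rewrite !perm1.
Qed.

Lemma permFM (s t : 'S_n) (F : 'M[R]_(n, q)) :
  permF (s * t) F = permF s (permF t F).
Proof. by apply/matrixP => i k; rewrite !mxE permM. Qed.

Lemma permGM (s t : 'S_n) (G : 'I_n -> 'I_n -> 'M[R]_p) :
  permG (s * t) G = permG s (permG t G).
Proof.
by rewrite /permG; do 2!apply: functional_extensionality => ?; rewrite !permM.
Qed.

Lemma pep_symmetry1 : pep_symmetry 1.
Proof. by move=> F G feas; rewrite permF1 permG1. Qed.

Lemma pep_symmetryM s t :
  pep_symmetry s -> pep_symmetry t -> pep_symmetry (s * t).
Proof.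
move=> sym_s sym_t F G /sym_t[/sym_s[feas obj_s] obj_t].
by rewrite permFM permGM obj_s obj_t.
Qed.

Lemma all_agents_equivalent_symmetry :
  all_agents_equivalent P -> forall s, pep_symmetry s.
Proof.
move=> equiv s; have [ts -> _] := prod_tpermP s.
apply: (big_ind pep_symmetry pep_symmetry1 pep_symmetryM) => t _.
exact: equiv.
Qed.
End Symmetries.

Section PermutationSums.
Variables (V : nmodType) (n : nat).

Lemma sum_perm_point (f : 'I_n -> V) (i : 'I_n) :
  (\sum_(s : 'S_n) f (s i)) *+ n = (\sum_m f m) *+ n`!.
Proof.
have orbit_const m : \sum_(s : 'S_n) f (s m) = \sum_(s : 'S_n) f (s i).
  rewrite [LHS](reindex_inj (mulgI (tperm i m))).
  by apply: eq_bigr => s _; rewrite permM tpermR.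
transitivity (\sum_m \sum_(s : 'S_n) f (s m)).
  by rewrite (eq_bigr _ (fun m _ => orbit_const m)) sumr_const card_ord.
rewrite exchange_big -card_Sn -sumr_const; apply: eq_bigr => s _.
by rewrite [RHS](reindex_inj (@perm_inj _ s)).
Qed.

Lemma sum_perm_pair (g : 'I_n -> 'I_n -> V) (i j : 'I_n) : i != j ->
  (\sum_(s : 'S_n) g (s i) (s j)) *+ (n * (n - 1))
  = (\sum_x \sum_(y | y != x) g x y) *+ n`!.
Proof.
move=> neq_ij.
have orbit_const x y : y != x ->
    \sum_(s : 'S_n) g (s x) (s y) = \sum_(s : 'S_n) g (s i) (s j).
  move=> neq_yx; set y' := tperm x i y.
  have neq_y'i : y' != i.
    by apply: contra neq_yx => /eqP y'i; rewrite -(tpermK x i y) -/y' y'i tpermR.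
  rewrite [LHS](reindex_inj (mulgI (tperm x i * tperm y' j)%g)).
  apply: eq_bigr => s _; rewrite !permM tpermL -/y' tpermL.
  by rewrite tpermD // eq_sym.
transitivity (\sum_x \sum_(y | y != x) \sum_(s : 'S_n) g (s x) (s y)).
  rewrite mulnC mulrnA -[X in _ *+ X = _]card_ord -sumr_const.
  apply: eq_bigr => x _.
  rewrite (eq_bigr _ (fun y => orbit_const x y)) subn1.
  rewrite -[X in _ *+ X.-1 = _]card_ord -(cardC1 x) -sumr_const.
  by apply: eq_bigl => y; rewrite inE.
rewrite -card_Sn -sumr_const.
under eq_bigr do rewrite exchange_big.
rewrite exchange_big; apply: eq_bigr => s _.
rewrite [RHS](reindex_inj (@perm_inj _ s)); apply: eq_bigr => x _.
rewrite [RHS](reindex_inj (@perm_inj _ s)); apply: eq_bigl => y.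
by rewrite (inj_eq (@perm_inj _ s)).
Qed.
End PermutationSums.

Lemma scaler_nat_cancel (R : numFieldType) (V : lmodType R) (u v : V)
    (m k : nat) :
  (0 < m)%N -> (0 < k)%N -> u *+ m = v *+ k -> k%:R^-1 *: u = m%:R^-1 *: v.
Proof.
move=> m_gt0 k_gt0 e.
have m_neq0 : (m%:R : R) != 0 by rewrite pnatr_eq0 -lt0n.
have k_neq0 : (k%:R : R) != 0 by rewrite pnatr_eq0 -lt0n.
apply: (scalerI (mulf_neq0 m_neq0 k_neq0)).
by rewrite !scalerA (mulfK k_neq0) mulrAC (mulfV m_neq0) mul1r !scaler_nat.
Qed.

Section Symmetrization.
Variables (R : realFieldType) (n p q : nat).

Lemma row_permF (s : 'S_n) (F : 'M[R]_(n, q)) i :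
  row i (permF s F) = row (s i) F.
Proof. by apply/rowP => k; rewrite !mxE. Qed.

Lemma Fsym_avg (F : 'M[R]_(n, q)) :
  Fsym F = \sum_(s : 'S_n) (n`!%:R)^-1 *: permF s F.
Proof.
apply/row_matrixP => i; rewrite linear_sum.
have -> : row i (Fsym F) = fA F by apply/rowP => k; rewrite !mxE.
under eq_bigr do rewrite linearZ /= row_permF.
rewrite -scaler_sumr /fA; apply: scaler_nat_cancel; rewrite ?fact_gt0 //.
  exact: leq_ltn_trans (leq0n i) (ltn_ord i).
by rewrite (sum_perm_point (fun m => row m F)).
Qed.

Lemma Gsym_avg (G : 'I_n -> 'I_n -> 'M[R]_p) :
  Gsym G = fun i j => \sum_(s : 'S_n) (n`!%:R)^-1 *: permG s G i j.
Proof.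
apply: functional_extensionality => i; apply: functional_extensionality => j.
have n_gt0 : (0 < n)%N := leq_ltn_trans (leq0n i) (ltn_ord i).
rewrite -scaler_sumr /Gsym /permG; case: eqP => [<- | /eqP neq_ij].
  apply: scaler_nat_cancel; rewrite ?fact_gt0 //.
  by rewrite (sum_perm_point (fun m => G m m)).
apply: scaler_nat_cancel; rewrite ?fact_gt0 ?sum_perm_pair //.
by move: neq_ij (ltn_ord i) (ltn_ord j); rewrite -val_eqE /=; lia.
Qed.
End Symmetrization.

Theorem corollary1 (R : realFieldType) (n p q : nat) (P : PEP R n p q)
  (F : 'M[R]_(n, q)) (G : 'I_n -> 'I_n -> 'M[R]_p) :
  (2 <= n)%N ->
  all_agents_equivalent P ->
  feasible P F G ->
  feasible P (Fsym F) (Gsym G) /\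
  objective P (Fsym F) (Gsym G) = objective P F G.
Proof.
move=> _ equiv feas.
pose w (s : 'S_n) : R := (n`!%:R)^-1.
have w_ge0 s : 0 <= w s by rewrite invr_ge0 ler0n.
have w_sum1 : \sum_(s : 'S_n) w s = 1.
  rewrite /w sumr_const card_Sn -(mulr_natl (n`!%:R^-1)).
  by rewrite mulfV // pnatr_eq0 -lt0n fact_gt0.
have sym := all_agents_equivalent_symmetry equiv.
rewrite Fsym_avg Gsym_avg; split.
  by apply: (feasible_comb w_sum1) => // s; case: (sym s F G feas).
rewrite (objective_comb _ _ _ w_sum1).
under eq_bigr => s _ do rewrite (proj2 (sym s F G feas)).
by rewrite -mulr_suml w_sum1 mul1r.
Qed.
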